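(* For every fixed $m\ge 2$, \[s\text{-}sat(Q_n,Q_m)\ge\Big(\frac{m+1}{2}-o(1)\Big)2^n\quad\text{as } n\to\infty.\]
   Context: $Q_n$ is the hypercube on $\{0,1\}^n$ with edges between vertices differing in exactly one coordinate. A copy of $F$ is a subgraph isomorphic to $F$. A graph $G$ is $(Q_n,F)$-semi-saturated if $G\subseteq Q_n$ and adding any edge of $E(Q_n)\setminus E(G)$ increases the number of copies of $F$. $s\text{-}sat(Q_n,F)$ is the minimum number of edges of a $(Q_n,F)$-semi-saturated graph. *)

From HB Require Import structures.
From mathcomp Require Import all_boot all_order all_algebra.
Unset Printing Implicit Defensive.

Definition vert (n : nat) := {ffun 'I_n -> bool}.

Definition cube_adj (n : nat) (u v : vert n) : bool :=
  #|[set i : 'I_n | u i != v i]| == 1.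

Definition cube_edges (n : nat) : {set {set vert n}} :=
  [set e : {set vert n} | [exists u : vert n, exists v : vert n,
      cube_adj n u v && (e == [set u; v])]].

(* A copy of Q_m in the graph (V(Q_n), E): a subgraph (A, S), with S a set of
   edges of E, which is isomorphic to Q_m, i.e. there is an injection
   f : V(Q_m) -> V(Q_n) mapping V(Q_m) onto A and E(Q_m) onto S. *)
Definition is_copy (n m : nat) (E : {set {set vert n}})
    (H : {set vert n} * {set {set vert n}}) : bool :=
  (H.2 \subset E) &&
  [exists f : {ffun vert m -> vert n},
     [&& injectiveb f,
         H.1 == f @: [set: vert m] &
         H.2 == [set (f @: e) | e : {set vert m} in cube_edges m]]].

Definition ncopies (n m : nat) (E : {set {set vert n}}) : nat :=
  #|[set H | is_copy n m E H]|.

Definition semisat (n m : nat) (E : {set {set vert n}}) : bool :=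
  (E \subset cube_edges n) &&
  [forall e in cube_edges n :\: E, ncopies n m E < ncopies n m (e |: E)].

Lemma semisat_full (n m : nat) : semisat n m (cube_edges n).
Proof.
apply/andP; split=> //; apply/forall_inP=> e.
by rewrite setDv inE.
Qed.

Lemma exists_semisat_size (n m : nat) :
  exists k, [exists E : {set {set vert n}}, semisat n m E && (#|E| == k)].
Proof.
exists #|cube_edges n|; apply/existsP; exists (cube_edges n).
by rewrite semisat_full eqxx.
Qed.

Definition ssat (n m : nat) : nat := ex_minn (exists_semisat_size n m).

From HB Require Import structures.
From mathcomp Require Import all_boot all_order all_algebra.
From mathcomp Require Import zify lra.
Set Implicit Arguments. Unset Strict Implicit.

(* Let E be (Q_n, Q_m)-semi-saturated.  If the edge {u, u + e_j} is missing
   from E, the copy of Q_m created by adding it shows that for at least m - 1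
   directions a the other three sides of the square u, u + e_a, u + e_a + e_j,
   u + e_j lie in E.  Hence every degree is at least m - 1, all neighbours of a
   vertex of degree m - 1 have degree at least n - m + 1, and a vertex of degree
   m has a neighbour of degree at least T = (n - m)/2.  Call the vertices of
   degree at least T big.  Charge every small vertex with its degree, one unit
   per big neighbour, and one more unit if its degree is 1 (then m = 2, and its
   unique neighbour is big and has no other neighbour of degree 1).  Each small
   vertex gets at least m + 1, and the total charge is at most
   sum deg + #big; with T #big <= sum deg = 2|E| this yields
   (m + 1) T 2^n <= (T + m + 2) 2|E|. *)

Lemma sum_nat_b2n (T : finType) (P Q : pred T) :
  \sum_(x | P x) (Q x : nat) = #|[set x | P x & Q x]|.
Proof. by rewrite -sum1dep_card big_mkcondr; apply: eq_bigr => x _; case: (Q x). Qed.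

Lemma card_set_sum (T : finType) (P : pred T) : #|[set x | P x]| = \sum_x (P x : nat).
Proof. by rewrite -sum1dep_card big_mkcond; apply: eq_bigr => x _; case: (P x). Qed.

Section Hypercube.
Variable n : nat.
Implicit Types (u v w : vert n) (E : {set {set vert n}}).

Definition flip u (i : 'I_n) : vert n :=
  [ffun k => if k == i then ~~ u k else u k].

Lemma flipE u i k : flip u i k = if k == i then ~~ u k else u k.
Proof. by rewrite ffunE. Qed.

Lemma flipK u i : flip (flip u i) i = u.
Proof. by apply/ffunP => k; rewrite !flipE; case: eqP; rewrite ?negbK. Qed.

Lemma flipC u i j : flip (flip u i) j = flip (flip u j) i.
Proof. by apply/ffunP => k; rewrite !flipE; case: (k == i); case: (k == j). Qed.

Lemma flip_neq u i : flip u i != u.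
Proof. by apply/eqP => /ffunP /(_ i); rewrite flipE eqxx; case: (u i). Qed.

Lemma flipI u : injective (flip u).
Proof.
move=> i j /ffunP /(_ i); rewrite !flipE eqxx.
by case: eqP => // _; case: (u i).
Qed.

Lemma flip2_eq u a b c j : a != j -> c != a ->
  flip (flip u a) c = flip (flip u j) b -> c = j.
Proof.
move=> aj ca; case: (b =P j) => [-> | /eqP bj].
  rewrite flipK => /(congr1 (flip^~ c)); rewrite flipK => /flipI ac.
  by rewrite ac eqxx in ca.
move/ffunP/(_ j); rewrite !flipE eqxx (eq_sym j a) (negbTE aj).
rewrite (eq_sym j b) (negbTE bj).
by case: eqP => [-> // | _]; case: (u j).
Qed.

Lemma cube_adjP u v : reflect (exists i, v = flip u i) (cube_adj n u v).
Proof.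
apply: (iffP idP) => [/cards1P [i hi] | [i ->]].
  exists i; apply/ffunP => k; rewrite flipE.
  have : (k \in [set i | u i != v i]) = (k \in [set i]) by rewrite hi.
  rewrite !inE.
  case: (k =P i) => [-> | _ /negbFE /eqP -> //].
  by case: (u i); case: (v i).
apply/eqP; rewrite -(cards1 i); apply: eq_card => k.
rewrite !inE flipE; case: (k =P i) => [-> | _]; last by rewrite eqxx.
by case: (u i).
Qed.

Lemma cube_edgesP e :
  reflect (exists u i, e = [set u; flip u i]) (e \in cube_edges n).
Proof.
rewrite inE; apply: (iffP existsP).
  by move=> [u /existsP [v /andP [/cube_adjP [i ->] /eqP ->]]]; exists u, i.
move=> [u [i ->]]; exists u; apply/existsP; exists (flip u i).
by rewrite eqxx andbT; apply/cube_adjP; exists i.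
Qed.

Lemma cube_edge_flip u w : [set u; w] \in cube_edges n -> exists i, w = flip u i.
Proof.
case/cube_edgesP => x [i he].
have /set2P hx : x \in [set u; w] by rewrite he set21.
have /set2P hy : flip x i \in [set u; w] by rewrite he set22.
have xy := flip_neq x i.
case: hx xy hy => -> xy [] hy; rewrite ?hy ?eqxx // in xy.
- by exists i.
- by exists i; rewrite -hy flipK.
Qed.

Lemma cube_edge_card e : e \in cube_edges n -> #|e| = 2.
Proof. by case/cube_edgesP => u [i ->]; rewrite cards2 eq_sym flip_neq. Qed.

Definition edge E u i := [set u; flip u i] \in E.

Definition deg E u := #|[set i | edge E u i]|.

Lemma edge_flip E u i : edge E (flip u i) i = edge E u i.
Proof. by rewrite /edge flipK setUC. Qed.

Lemma deg_sum E u : deg E u = \sum_i (edge E u i : nat).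
Proof. exact: card_set_sum. Qed.

Lemma sum_flip (G : vert n -> 'I_n -> nat) :
  \sum_u \sum_i G u i = \sum_u \sum_i G (flip u i) i.
Proof.
rewrite !pair_bigA (reindex_inj (h := fun p : vert n * 'I_n => (flip p.1 p.2, p.2))) //=.
move=> [u i] [w j] /= [h ij]; subst j.
by rewrite -[u](flipK u i) h flipK.
Qed.

Lemma edge_setI u : injective (fun i => [set u; flip u i]).
Proof.
move=> i j h; have : flip u i \in [set u; flip u j] by rewrite -h set22.
by rewrite !inE (negbTE (flip_neq u i)) => /eqP /flipI.
Qed.

Lemma deg_le_incident E u : deg E u <= #|[set e in E | u \in e]|.
Proof.
rewrite /deg -(card_imset _ (@edge_setI u)); apply: subset_leq_card.
apply/subsetP => _ /imsetP [i + ->]; rewrite !inE => ei.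
by rewrite [_ \in E]ei eqxx.
Qed.

Lemma handshake E : E \subset cube_edges n -> \sum_u deg E u <= 2 * #|E|.
Proof.
move=> sE; apply: (@leq_trans (\sum_u #|[set e in E | u \in e]|)).
  by apply: leq_sum => u _; apply: deg_le_incident.
under eq_bigr => u _ do rewrite -sum_nat_b2n.
rewrite exchange_big /= mulnC -sum_nat_const; apply: leq_sum => e eE.
by rewrite sum_nat_b2n -(cube_edge_card (subsetP sE e eE)); apply: subset_leq_card; apply/subsetP => u; rewrite inE.
Qed.

Lemma sum_nbrs_in_le E (P : pred (vert n)) :
  \sum_(u | ~~ P u) #|[set i | edge E u i & P (flip u i)]| <= \sum_(u | P u) deg E u.
Proof.
have -> : \sum_(u | ~~ P u) #|[set i | edge E u i & P (flip u i)]|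
        = \sum_u \sum_i ([&& ~~ P u, edge E u i & P (flip u i)] : nat).
  rewrite big_mkcond; apply: eq_bigr => u _ /=.
  case: (P u); first by rewrite big1.
  by rewrite -sum_nat_b2n big_mkcond; apply: eq_bigr => i _; case: (edge E u i).
rewrite sum_flip [X in _ <= X]big_mkcond /=; apply: leq_sum => u _.
case: (boolP (P u)) => Pu; last by rewrite big1 // => i _; rewrite flipK (negbTE Pu) !andbF.
rewrite deg_sum; apply: leq_sum => i _.
by rewrite flipK edge_flip Pu andbT; case: (~~ _).
Qed.

End Hypercube.

Section SemiSaturated.
Variables (n m : nat) (E : {set {set vert n}}).
Implicit Types (u : vert n) (a j : 'I_n).

Definition square_dirs u j :=
  [set a | [&& edge E u a, edge E (flip u a) j & edge E (flip u j) a]].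

Lemma square_dirs_sub u j : square_dirs u j \subset [set a | edge E u a].
Proof. by apply/subsetP => a; rewrite !inE => /and3P []. Qed.

Lemma copy_square (f : vert m -> vert n) u j p (k i : 'I_m) :
    E \subset cube_edges n -> injective f ->
    f p = u -> f (flip p k) = flip u j ->
    (forall x l, f x \notin [set u; flip u j] -> [set f x; f (flip x l)] \in E) ->
  i != k -> f (flip p i) \in [set flip u a | a in square_dirs u j].
Proof.
(* f maps the square p, p + e_i, p + e_i + e_k, p + e_k of Q_m onto the square
   at u built from the missing edge and the direction of f (p + e_i) from u. *)
move=> sE finj fp fq fE ik.
set r := flip p i; set s := flip r k.
have sC : s = flip (flip p k) i by rewrite /s /r flipC.
have rp : r != p := flip_neq p i.
have rq : r != flip p k by apply: contra ik => /eqP /flipI ->.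
have sp : s != p.
  by apply: contra ik => /eqP /(congr1 (fun x => flip x k)); rewrite /s flipK => /flipI ->.
have sq : s != flip p k by rewrite sC flip_neq.
have fout z : z != p -> z != flip p k -> f z \notin [set u; flip u j].
  by move=> zp zq; rewrite -fq -fp !inE !(inj_eq finj) negb_or zp zq.
have E1 : [set u; f r] \in E.
  by move: (fE r i (fout r rp rq)); rewrite /r flipK setUC fp.
have E2 : [set f r; f s] \in E by rewrite fE ?fout.
have E3 : [set flip u j; f s] \in E.
  by move: (fE s i (fout s sp sq)); rewrite {2}sC flipK setUC fq.
have [a ha] := cube_edge_flip (subsetP sE _ E1).
have [c hc] := cube_edge_flip (subsetP sE _ E2).
have [b hb] := cube_edge_flip (subsetP sE _ E3).
have aj : a != j.
  by apply: contra rq => /eqP aj; rewrite -(inj_eq finj); apply/eqP; rewrite ha fq aj.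
have ca : c != a.
  by apply: contra sp => /eqP ca; rewrite -(inj_eq finj); apply/eqP; rewrite hc ha ca flipK fp.
have cj : c = j by apply: (flip2_eq (u := u) (b := b) aj ca); rewrite -ha -hc hb.
subst c; apply/imsetP; exists a => //; rewrite inE; apply/and3P; split.
- by rewrite /edge -ha.
- by rewrite /edge -ha -hc.
- by rewrite /edge flipC -ha -hc.
Qed.

Hypothesis hs : semisat n m E.

Lemma semisat_sub : E \subset cube_edges n.
Proof. by case/andP: hs. Qed.

Lemma semisat_new_copy e : e \in cube_edges n :\: E ->
  exists2 f : vert m -> vert n, injective f &
    (forall x i, [set f x; f (flip x i)] \in e |: E) /\
    exists x i, e = [set f x; f (flip x i)].
Proof.
move=> eC; have lt : ncopies n m E < ncopies n m (e |: E).
  by case/andP: hs => _ /forall_inP; apply.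
have [H /andP [cH ncH]] : exists H, is_copy n m (e |: E) H && ~~ is_copy n m E H.
  apply/existsP; apply: contraLR lt; rewrite -leqNgt => /existsPn hno.
  apply: subset_leq_card; apply/subsetP => H; rewrite !inE => hH.
  by have := hno H; rewrite hH /= negbK.
case/andP: cH => subH hf; case/existsP: (hf) => f /and3P [/injectiveP finj _ /eqP H2].
exists f => //; split.
  move=> x i; apply: (subsetP subH); rewrite H2; apply/imsetP.
  exists [set x; flip x i]; first by apply/cube_edgesP; exists x, i.
  by rewrite imsetU1 imset_set1.
have : e \in H.2.
  apply: contraNT ncH => neH; rewrite /is_copy hf andbT.
  apply/subsetP => x xH; move: (subsetP subH x xH); rewrite in_setU1.
  by case/orP => [/eqP xe | //]; rewrite -xe xH in neH.
rewrite H2 => /imsetP [_ /cube_edgesP [x [i ->]] ->].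
by exists x, i; rewrite imsetU1 imset_set1.
Qed.

Lemma semisat_missing_edge_copy u j : ~~ edge E u j ->
  exists (f : vert m -> vert n) p k, [/\ injective f, f p = u, f (flip p k) = flip u j &
    forall x l, f x \notin [set u; flip u j] -> [set f x; f (flip x l)] \in E].
Proof.
move=> nej; have eC : [set u; flip u j] \in cube_edges n :\: E.
  by rewrite inE nej; apply/cube_edgesP; exists u, j.
have [f finj [fE [x [i he]]]] := semisat_new_copy eC.
have fE' y l : f y \notin [set u; flip u j] -> [set f y; f (flip y l)] \in E.
  move=> yn; move: (fE y l); rewrite in_setU1 => /orP [/eqP he' | //].
  by rewrite -he' set21 in yn.
have /set2P : u \in [set f x; f (flip x i)] by rewrite -he set21.
have /set2P : flip u j \in [set f x; f (flip x i)] by rewrite -he set22.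
have uv := flip_neq u j.
case=> hv [] hu.
- by rewrite hv hu eqxx in uv.
- by exists f, (flip x i), i; rewrite flipK -hu -hv.
- by exists f, x, i; rewrite -hu -hv.
- by rewrite hv hu eqxx in uv.
Qed.

Lemma card_square_dirs u j : ~~ edge E u j -> m.-1 <= #|square_dirs u j|.
Proof.
move=> nej; have [f [p [k [finj fp fq fE]]]] := semisat_missing_edge_copy nej.
have sub : [set f (flip p i) | i in [set~ k]] \subset [set flip u a | a in square_dirs u j].
  apply/subsetP => _ /imsetP [i + ->]; rewrite in_setC1.
  exact: copy_square semisat_sub finj fp fq fE.
have := leq_trans (subset_leq_card sub) (leq_imset_card _ _).
by rewrite card_imset ?cardsC1 ?card_ord // => x y /finj /flipI.
Qed.

Lemma semisat_deg_ge u : m.-1 <= n -> m.-1 <= deg E u.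
Proof.
move=> hmn; case: (boolP [forall i, edge E u i]) => [/forallP hall | /forallPn [j nej]].
  rewrite /deg; suff -> : [set i | edge E u i] = setT by rewrite cardsT card_ord.
  by apply/setP => i; rewrite !inE hall.
exact: leq_trans (card_square_dirs nej) (subset_leq_card (square_dirs_sub u j)).
Qed.

Lemma min_deg_square u a j :
  deg E u = m.-1 -> edge E u a -> ~~ edge E u j -> a \in square_dirs u j.
Proof.
rewrite /deg => du ea nej.
suff /eqP -> : square_dirs u j == [set a | edge E u a] by rewrite inE.
by rewrite eqEcard square_dirs_sub du card_square_dirs.
Qed.

Lemma deg_nbr_of_min_deg u a :
  deg E u = m.-1 -> edge E u a -> n - m.-1 <= deg E (flip u a).
Proof.
move=> du ea.
have sub : ~: [set j | edge E u j] \subset [set j | edge E (flip u a) j].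
  apply/subsetP => j; rewrite !inE => nej.
  by have := min_deg_square du ea nej; rewrite inE => /and3P [].
apply: leq_trans (subset_leq_card sub).
by rewrite -du -[n in n - _](card_ord n) -(cardsC [set j | edge E u j]) addKn.
Qed.

Lemma sum_nbr_deg_ge u :
  (n - deg E u) * m.-1 <= \sum_(a | edge E u a) deg E (flip u a).
Proof.
apply: (@leq_trans (\sum_(j | ~~ edge E u j) m.-1)).
  rewrite sum_nat_cond_const leq_mul2r; apply/orP; right.
  have -> : [set j | ~~ edge E u j] = ~: [set j | edge E u j] by apply/setP => j; rewrite !inE.
  by rewrite -[n in n - _](card_ord n) -(cardsC [set j | edge E u j]) addKn.
apply: (@leq_trans (\sum_(a | edge E u a) \sum_(j | ~~ edge E u j) (edge E (flip u a) j : nat))).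
  rewrite exchange_big /=; apply: leq_sum => j nej; rewrite sum_nat_b2n.
  apply: leq_trans (card_square_dirs nej) (subset_leq_card _).
  by apply/subsetP => a; rewrite !inE => /and3P [-> -> _].
apply: leq_sum => a _; rewrite sum_nat_b2n; apply: subset_leq_card.
by apply/subsetP => j; rewrite !inE => /andP [_ ->].
Qed.

Lemma big_nbr_of_deg_m u T : deg E u = m -> m * T < (n - m) * m.-1 + m ->
  exists2 a, edge E u a & T <= deg E (flip u a).
Proof.
move=> du hT; case: (boolP [exists a, edge E u a && (T <= deg E (flip u a))]).
  by case/existsP => a /andP [ea Ta]; exists a.
move/existsPn => small; exfalso.
have : \sum_(a | edge E u a) (deg E (flip u a) + 1) <= m * T.
  rewrite -du /deg -sum_nat_cond_const; apply: leq_sum => a ea.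
  by have := small a; rewrite ea /= addn1 -ltnNge.
rewrite big_split /= sum_nat_cond_const muln1 -/(deg E u) du.
move: (sum_nbr_deg_ge u); rewrite du => h1 h2.
by have := leq_trans (leq_add h1 (leqnn m)) h2; lia.
Qed.

End SemiSaturated.

Section Discharging.
Variables (n m T : nat) (E : {set {set vert n}}).
Hypotheses (hs : semisat n m E) (hm : 2 <= m) (hmn : m <= n).
Hypotheses (hT1 : T <= n - m.-1) (hT2 : m * T < (n - m) * m.-1 + m).

Definition big_nbrs u := #|[set i | edge E u i & T <= deg E (flip u i)]|.

Lemma card_deg1_nbrs_le x : #|[set i | edge E x i & deg E (flip x i) == 1]| <= (T <= deg E x).
Proof.
case: (set_0Vmem [set i | edge E x i & deg E (flip x i) == 1]) => [-> | [i]].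
  by rewrite cards0.
rewrite inE => /andP [exi /eqP d1]; set u := flip x i in d1.
have dm : deg E u = m.-1.
  by have := semisat_deg_ge hs u (leq_trans (leq_pred m) hmn); rewrite d1; lia.
have eu : edge E u i by rewrite edge_flip.
have -> : T <= deg E x.
  apply: leq_trans hT1 _; rewrite -[x](flipK x i) -/u.
  exact: (deg_nbr_of_min_deg hs dm eu).
have Du : [set a | edge E u a] = [set i].
  by apply/esym/eqP; rewrite eqEcard sub1set inE eu cards1; move: d1; rewrite /deg => ->.
apply: (@leq_trans #|[set i]|); last by rewrite cards1.
apply/subset_leq_card/subsetP => i'.
rewrite !inE => /andP [exi' d1'].
apply: contraTT d1' => ne.
have nu : ~~ edge E u i'.
  by apply: contra ne => eu'; rewrite -in_set1 -Du inE.
have := min_deg_square hs dm eu nu; rewrite inE => /and3P [_ _].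
rewrite /u flipC edge_flip => e2.
have e3 : edge E (flip x i') i' by rewrite edge_flip.
have : #|[set i; i']| <= deg E (flip x i').
  by apply/subset_leq_card/subsetP => z; rewrite !inE => /orP [] /eqP ->.
rewrite cards2 eq_sym ne /= => d2; apply/eqP => d2'; by rewrite d2' in d2.
Qed.

Lemma small_charge u : deg E u < T -> m.+1 <= deg E u + big_nbrs u + (deg E u == 1).
Proof.
move=> small; have := semisat_deg_ge hs u (leq_trans (leq_pred m) hmn).
case: (ltngtP (deg E u) m) => [lt | gt | eq] ge.
- have du : deg E u = m.-1 by lia.
  have -> : big_nbrs u = deg E u.
    apply: eq_card => i; rewrite !inE; case: (boolP (edge E u i)) => //= ei.
    exact: leq_trans hT1 (deg_nbr_of_min_deg hs du ei).
  by rewrite du; case: (m.-1 =P 1) => /= ?; lia.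
- lia.
- have [a ea ba] := big_nbr_of_deg_m hs eq hT2.
  have : 0 < big_nbrs u by apply/card_gt0P; exists a; rewrite inE ea ba.
  lia.
Qed.

Lemma card_deg1_le_big : #|[set u | deg E u == 1]| <= #|[set u | T <= deg E u]|.
Proof.
apply: (@leq_trans (\sum_u \sum_i (edge E u i && (deg E u == 1) : nat))).
  rewrite -sum1dep_card big_mkcond /=; apply: leq_sum => u _.
  case: eqP => // du; under eq_bigr do rewrite andbT.
  by rewrite -deg_sum du.
rewrite sum_flip -sum1dep_card [X in _ <= X]big_mkcond /=; apply: leq_sum => x _.
under eq_bigr do rewrite edge_flip.
by rewrite -card_set_sum card_deg1_nbrs_le.
Qed.

Lemma semisat_sum_deg_ge : m.+1 * T * 2 ^ n <= (\sum_u deg E u) * (T + m + 2).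
Proof.
have hS : \sum_u deg E u = \sum_(u | T <= deg E u) deg E u + \sum_(u | deg E u < T) deg E u.
  by rewrite (bigID (fun u => T <= deg E u)) /=; congr (_ + _); apply: eq_bigl => u; rewrite ltnNge.
have hV : #|[set u | T <= deg E u]| + #|[set u | deg E u < T]| = 2 ^ n.
  rewrite (_ : [set u | deg E u < T] = ~: [set u | T <= deg E u]).
    by rewrite cardsC card_ffun card_bool card_ord.
  by apply/setP => u; rewrite !inE ltnNge.
have hTB : #|[set u | T <= deg E u]| * T <= \sum_(u | T <= deg E u) deg E u.
  by rewrite -sum_nat_cond_const; apply: leq_sum.
have hcharge : #|[set u | deg E u < T]| * m.+1 <=
    \sum_(u | deg E u < T) deg E u + \sum_(u | deg E u < T) big_nbrs u
    + \sum_(u | deg E u < T) (deg E u == 1 : nat).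
  by rewrite -sum_nat_cond_const -!big_split; apply: leq_sum => u; apply: small_charge.
have hbig : \sum_(u | deg E u < T) big_nbrs u <= \sum_(u | T <= deg E u) deg E u.
  rewrite (eq_bigl (fun u => ~~ (T <= deg E u))) => [|u]; last by rewrite ltnNge.
  exact: sum_nbrs_in_le.
have hdeg1 : \sum_(u | deg E u < T) (deg E u == 1 : nat) <= #|[set u | T <= deg E u]|.
  rewrite sum_nat_b2n; apply: leq_trans card_deg1_le_big.
  by apply/subset_leq_card/subsetP => u; rewrite !inE => /andP [].
rewrite hS -hV; move: hTB hcharge hbig hdeg1.
move: (\sum_(u | T <= _) _) (\sum_(u | _ < T) deg E u) (\sum_(u | _ < T) big_nbrs u) => Sb Ss Sn.
move: (\sum_(u | _ < T) _) #|[set u | T <= _]| #|[set u | _ < T]| => S1 B Bs.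
nia.
Qed.

End Discharging.

Lemma semisat_card_ge n m (E : {set {set vert n}}) :
    semisat n m E -> 2 <= m -> m <= n ->
  m.+1 * ((n - m) %/ 2) * 2 ^ n <= 2 * #|E| * ((n - m) %/ 2 + m + 2).
Proof.
move=> hs hm hmn; set T := (n - m) %/ 2.
have hT1 : T <= n - m.-1 by rewrite /T; lia.
have hT2 : m * T < (n - m) * m.-1 + m.
  have : 2 * T <= n - m by rewrite /T; lia.
  move: (n - m) => d; nia.
apply: leq_trans (semisat_sum_deg_ge hs hm hmn hT1 hT2) _.
by rewrite leq_mul2r handshake ?orbT // (semisat_sub hs).
Qed.

Import Order.TTheory GRing.Theory Num.Theory.
Local Open Scope ring_scope.

Lemma ratio_lower_bound (R : realFieldType) (a t P k eps : R) :
    0 <= a -> 0 <= t -> 0 <= P -> 0 < eps ->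
    (a + 1) * t * P <= 2 * k * (t + a + 2) -> (a + 1) * (a + 2) < 2 * eps * t ->
  ((a + 1) / 2 - eps) * P <= k.
Proof.
move=> a0 t0 P0 eps0 hk ht; have pos : 0 < t + a + 2 by lra.
rewrite -(ler_pM2r pos).
have : (a + 1) * (a + 2) * P <= 2 * eps * t * P by rewrite ler_wpM2r // ltW.
have : 0 <= eps * P * (a + 2) by rewrite !mulr_ge0 // ?ltW //; lra.
nra.
Qed.

Theorem theorem4 (m : nat) (hm : (2 <= m)%N) :
  forall eps : rat, 0 < eps ->
  exists N : nat, forall n : nat, (N <= n)%N ->
    ((m.+1)%:R / 2 - eps) * (2 ^ n)%:R <= (ssat n m)%:R :> rat.
Proof.
move=> eps eps_gt0; set x : rat := (m.+1 * m.+2)%:R / (2 * eps).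
have x_ge0 : 0 <= x by rewrite divr_ge0 // mulr_ge0 // ltW.
exists (m + 2 * Num.bound x + 2)%N => n hn; set T := ((n - m) %/ 2)%N.
have hxT : x < T%:R by apply: lt_le_trans (archi_boundP x_ge0) _; rewrite ler_nat /T; lia.
rewrite /ssat; case: ex_minnP => k /existsP [E /andP [hs /eqP <-]] _.
have hmn : (m <= n)%N by lia.
have := semisat_card_ge hs hm hmn; rewrite -/T -(ler_nat rat) !natrM !natrD.
rewrite -[m.+1]addn1 natrD => hE.
apply: (ratio_lower_bound _ _ _ eps_gt0 hE) => //.
by move: hxT; rewrite /x ltr_pdivrMr ?mulr_gt0 // mulrC natrM -[m.+2]addn2 -[m.+1]addn1 !natrD.
Qed.
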